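(* Let $\{x^k\}$ be generated by the ABP algorithm described in the context, and assume (A1)–(A7): (A1) $\mathcal F$ is continuously differentiable; (A2) $C$, $Q$ nonempty closed convex, $z_i^*>-\infty$ for each $i$; (A3) each $f_i$ convex; (A4) $\Omega\ne\emptyset$; (A5) $\lambda_k>0$, $\sum\lambda_k=\infty$, $\sum\lambda_k^2<\infty$; (A6) $0<\underline\alpha\le\alpha_k\le\bar\alpha$, $0<\underline\beta\le\beta_k\le\bar\beta$, $0<\underline\gamma\le\gamma_k\le\bar\gamma$ for all $k$; (A7) $\varphi_{\mathrm{lb}}=\varphi^*$. Then for every $x^*\in\Omega$ the sequence $\{\|x^k-x^*\|^2\}$ converges; in particular $\{x^k\}$ is bounded.
   Context: Let $n,m\ge1$, $\mathcal F=(f_1,\dots,f_m)\colon\mathbb R^n\to\mathbb R^m$, $C\subset\mathbb R^n$, $Q\subset\mathbb R^m$, $Q^+:=Q-\mathbb R^m_+=\{y-u:y\in Q,u\in\mathbb R^m_+\}$; $P_S$ is Euclidean projection onto a nonempty closed convex set $S$. Let $z_i^*:=\inf_{x\in C}f_i(x)$, fix $r$ with $r_i>0$, $\sum r_i=1$. Define $\varphi(x):=\max_ir_i(f_i(x)-z_i^* )$, $H(x):=\tfrac12\mathrm{dist}^2(x,C)$, $G(x):=\tfrac12\mathrm{dist}^2(\mathcal F(x),Q^+)$, $\mathcal S:=\{x:H(x)=0,G(x)=0\}$, $\varphi^*:=\inf_{\mathcal S}\varphi$, $\Omega:=\{x\in\mathcal S:\varphi(x)=\varphi^*\}$, $\varphi_{\mathrm{lb}}:=\inf_C\varphi$.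 ABP algorithm: given $x^0$, $\mu>0$, positive sequences $\{\alpha_k\},\{\beta_k\},\{\gamma_k\},\{\lambda_k\}$: $p^k:=P_{Q^+}(\mathcal F(x^k))$, $\rho^k:=\mathcal F(x^k)-p^k$, $z^k:=x^k-P_C(x^k)$, $v^k:=J_{\mathcal F}(x^k)^T\rho^k$, $w^k:=r_{i^*}\nabla f_{i^*}(x^k)$ with arbitrary $i^*\in\arg\max_ir_i(f_i(x^k)-z_i^* )$, $\Delta_k:=\varphi(x^k)-\varphi_{\mathrm{lb}}$, $d^k:=\alpha_k\mathbf 1_{\{\Delta_k\ge0\}}w^k+\beta_kz^k+\gamma_kv^k$, $\eta_k:=\max(\mu,\|d^k\|)$, $x^{k+1}:=x^k-(\lambda_k/\eta_k)d^k$. *)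

From HB Require Import structures.
From mathcomp Require Import all_boot all_order all_algebra.
From mathcomp Require Import all_classical all_reals all_analysis.
Set Implicit Arguments. Unset Strict Implicit. Unset Printing Implicit Defensive.
Import Order.TTheory GRing.Theory Num.Theory.
Import numFieldNormedType.Exports.
Local Open Scope classical_set_scope.
Local Open Scope ring_scope.

Section ABP.
Variable R : realType.

Definition dotp n (u v : 'rV[R]_n) : R := \sum_(j < n) u 0 j * v 0 j.
Definition enorm n (v : 'rV[R]_n) : R := Num.sqrt (dotp v v).

Definition dist n (x : 'rV[R]_n) (S : set 'rV[R]_n) : R :=
  inf [set enorm (x - y) | y in S].

Definition is_proj n (S : set 'rV[R]_n) (x p : 'rV[R]_n) : Prop :=
  S p /\ forall y, S y -> enorm (x - p) <= enorm (x - y).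

Definition convex_fun n (f : 'rV[R]_n -> R) : Prop :=
  forall x y (t : R), 0 <= t <= 1 ->
    f (t *: x + (1 - t) *: y) <= t * f x + (1 - t) * f y.

Definition Qplus m (Q : set 'rV[R]_m) : set 'rV[R]_m :=
  [set z | exists (y u : 'rV[R]_m), Q y /\ (forall i, 0 <= u 0 i) /\ z = y - u].

Definition fcomp n m (F : 'rV[R]_n -> 'rV[R]_m) (i : 'I_m) : 'rV[R]_n -> R :=
  fun x => F x 0 i.

(* Jacobian: we use the library's [jacobian F x : 'M_(n, m)] (= lin1_mx ('d F x)),
   which is the TRANSPOSE of the paper's J_F(x) (m x n); so J_F(x)^T rho is
   rho *m (jacobian F x)^T as a row vector. *)
Definition gradi n m (F : 'rV[R]_n -> 'rV[R]_m) (i : 'I_m) (x : 'rV[R]_n) : 'rV[R]_n :=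
  (col i (jacobian F x))^T.

Definition maxI m (g : 'I_m -> R) : R :=
  \big[Num.max/head 0 [seq g i | i <- enum 'I_m]]_(i < m) g i.

Definition zstar n m (F : 'rV[R]_n -> 'rV[R]_m) (C : set 'rV[R]_n) (i : 'I_m) : R :=
  inf [set fcomp F i x | x in C].

Definition varphi n m (F : 'rV[R]_n -> 'rV[R]_m) (C : set 'rV[R]_n) (r : 'I_m -> R)
  (x : 'rV[R]_n) : R :=
  maxI (fun i => r i * (fcomp F i x - zstar F C i)).

Definition Hfun n (C : set 'rV[R]_n) (x : 'rV[R]_n) : R := 2^-1 * dist x C ^+ 2.
Definition Gfun n m (F : 'rV[R]_n -> 'rV[R]_m) (Q : set 'rV[R]_m) (x : 'rV[R]_n) : R :=
  2^-1 * dist (F x) (Qplus Q) ^+ 2.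

Definition Sfeas n m (F : 'rV[R]_n -> 'rV[R]_m) C Q : set 'rV[R]_n :=
  [set x | Hfun C x = 0 /\ Gfun F Q x = 0].

Definition phistar n m (F : 'rV[R]_n -> 'rV[R]_m) C Q r : R :=
  inf [set varphi F C r x | x in Sfeas F C Q].

Definition Omega n m (F : 'rV[R]_n -> 'rV[R]_m) C Q r : set 'rV[R]_n :=
  [set x | Sfeas F C Q x /\ varphi F C r x = phistar F C Q r].

Definition phi_lb n m (F : 'rV[R]_n -> 'rV[R]_m) (C : set 'rV[R]_n) r : R :=
  inf [set varphi F C r x | x in C].

(* ABP direction d^k, given x = x^k, p = P_{Q^+}(F x^k), pC = P_C(x^k), i = i^*,
   and a = alpha_k, b = beta_k, c = gamma_k. *)
Definition abp_dir n m (F : 'rV[R]_n -> 'rV[R]_m) (C : set 'rV[R]_n) (r : 'I_m -> R)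
  (a b c : R) (x : 'rV[R]_n) (p : 'rV[R]_m) (pC : 'rV[R]_n) (i : 'I_m) : 'rV[R]_n :=
  let rho := F x - p in
  let z := x - pC in
  let v := rho *m (jacobian F x)^T in
  let w := r i *: gradi F i x in
  (if 0 <= varphi F C r x - phi_lb F C r then a else 0) *: w + b *: z + c *: v.
End ABP.

From HB Require Import structures.
From mathcomp Require Import all_boot all_order all_algebra.
From mathcomp Require Import all_classical all_reals all_analysis.
From mathcomp Require Import lra.
Set Implicit Arguments. Unset Strict Implicit. Unset Printing Implicit Defensive.
Import Order.TTheory GRing.Theory Num.Theory.
Import numFieldNormedType.Exports.
Local Open Scope classical_set_scope.
Local Open Scope ring_scope.

(* Each of the three parts of the direction d^k makes a
   nonnegative inner product with u = x^k - x*.  For z^k this is the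
   obtuse-angle property of P_C, as dist(x*, C) = 0.  For v^k = J^T rho^k,
   the residual rho^k is componentwise nonnegative, convexity of the f_i gives
   J u >= F x^k - F x* componentwise, and <rho^k, F x^k - F x*> >= 0 is the
   obtuse-angle property of P_{Q^+}.  For w^k, when Delta_k >= 0, (A7) gives
   r_i f_i x^k - r_i f_i x* >= phi x^k - phi x* >= 0, and convexity bounds this
   by r_i <grad f_i, u>.  Since the normalised step has length at most
   lambda_k, |x^{k+1} - x*|^2 <= |x^k - x*|^2 + lambda_k^2, and a nonnegative
   sequence whose increments are bounded by a summable sequence converges. *)

Section Dotp.
Variables (R : realType) (n : nat).
Implicit Types u v w : 'rV[R]_n.

Lemma dotpE u v : dotp u v = (u *m v^T) 0 0.
Proof. by rewrite /dotp !mxE; apply: eq_bigr => j _; rewrite mxE. Qed.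

Lemma dotpC u v : dotp u v = dotp v u.
Proof. by rewrite /dotp; apply: eq_bigr => j _; rewrite mulrC. Qed.

Lemma dotpDl u v w : dotp (u + v) w = dotp u w + dotp v w.
Proof. by rewrite /dotp -big_split; apply: eq_bigr => j _; rewrite mxE mulrDl. Qed.

Lemma dotpZl (a : R) u v : dotp (a *: u) v = a * dotp u v.
Proof. by rewrite /dotp mulr_sumr; apply: eq_bigr => j _; rewrite mxE mulrA. Qed.

Lemma dotpNl u v : dotp (- u) v = - dotp u v.
Proof. by rewrite -scaleN1r dotpZl mulN1r. Qed.

Lemma dotpBl u v w : dotp (u - v) w = dotp u w - dotp v w.
Proof. by rewrite dotpDl dotpNl. Qed.

Lemma dotpDr u v w : dotp w (u + v) = dotp w u + dotp w v.
Proof. by rewrite dotpC dotpDl !(dotpC w). Qed.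

Lemma dotpBr u v w : dotp w (u - v) = dotp w u - dotp w v.
Proof. by rewrite dotpC dotpBl !(dotpC w). Qed.

Lemma dotpZr (a : R) u v : dotp u (a *: v) = a * dotp u v.
Proof. by rewrite dotpC dotpZl dotpC. Qed.

Lemma dotp_ge0 v : 0 <= dotp v v.
Proof. by rewrite /dotp; apply: sumr_ge0 => j _; rewrite -expr2 sqr_ge0. Qed.

Lemma enorm_sqr v : enorm v ^+ 2 = dotp v v.
Proof. by rewrite /enorm sqr_sqrtr // dotp_ge0. Qed.

Lemma enorm_ge0 v : 0 <= enorm v.
Proof. exact: sqrtr_ge0. Qed.

Lemma enorm_le u v : (enorm u <= enorm v) = (dotp u u <= dotp v v).
Proof. by rewrite /enorm ler_sqrt // dotp_ge0. Qed.

Lemma dotpBZ u v (t : R) :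
  dotp (u - t *: v) (u - t *: v) = dotp u u - 2 * t * dotp u v + t ^+ 2 * dotp v v.
Proof. by rewrite dotpBl !dotpBr !dotpZl !dotpZr (dotpC v u) expr2; lra. Qed.

Lemma dotp_AMGM u v (t : R) :
  2 * t * dotp u v <= dotp u u + t ^+ 2 * dotp v v.
Proof. by have := dotp_ge0 (u - t *: v); rewrite dotpBZ; lra. Qed.

Lemma dotpD_le u v : dotp (u + v) (u + v) <= 2 * dotp u u + 2 * dotp v v.
Proof.
have := dotp_ge0 (u - v).
by rewrite !dotpBl !dotpBr !dotpDl !dotpDr (dotpC v u); lra.
Qed.

Lemma dotp_delta v i : dotp v (delta_mx 0 i) = v 0 i.
Proof.
rewrite /dotp (bigD1 i) //= big1 ?addr0 => [|j ji]; rewrite mxE eqxx /=.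
  by rewrite eqxx mulr1.
by rewrite (negbTE ji) mulr0.
Qed.

Lemma dotp_normalized_step_le u d (lam mu : R) :
  0 < mu -> 0 <= lam -> 0 <= dotp u d ->
  let v := u - (lam / Num.max mu (enorm d)) *: d in
  dotp v v <= dotp u u + lam ^+ 2.
Proof.
move=> mu0 lam0 ud0 /=; set t := lam / _.
have mx0 : 0 < Num.max mu (enorm d) by rewrite lt_max mu0.
have t0 : 0 <= t by rewrite divr_ge0 // ltW.
have td_le : t * enorm d <= lam.
  rewrite mulrAC ler_pdivrMr // ler_wpM2l //.
  by rewrite le_max lexx orbT.
have td_ge0 : 0 <= t * enorm d by rewrite mulr_ge0 // enorm_ge0.
rewrite dotpBZ -(enorm_sqr d) -exprMn.
have : 0 <= 2 * t * dotp u d by apply: mulr_ge0 => //; apply: mulr_ge0.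
have : (t * enorm d) ^+ 2 <= lam ^+ 2 by rewrite lerXn2r // nnegrE.
lra.
Qed.

End Dotp.

Lemma dotp_mulmxT (R : realType) n m (J : 'M[R]_(n, m)) (rho : 'rV[R]_m)
  (u : 'rV[R]_n) : dotp (rho *m J^T) u = dotp rho (u *m J).
Proof. by rewrite !dotpE trmx_mul mulmxA. Qed.

Section Projection.
Variables (R : realType) (n : nat).
Implicit Types (A : set 'rV[R]_n) (x y z p : 'rV[R]_n).
Local Open Scope convex_scope.

Lemma conv_rowE x y (t : {i01 R}) :
  (x : convex_lmodType 'rV[R]_n) <| t |> y = t%:num *: x + (1 - t%:num) *: y.
Proof. by []. Qed.

Lemma convex_setP A x y (t : R) : convex_set A -> 0 <= t <= 1 ->
  A x -> A y -> A (t *: x + (1 - t) *: y).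
Proof.
move=> cA /andP[t0 t1] Ax Ay.
by have := cA x y (Itv01 t0 t1); rewrite !inE conv_rowE; apply.
Qed.

(* For small [t > 0], minimality of [p] against [p + t (y - p)] gives
   [2 <x - p, y - p> <= t |y - p|^2]. *)
Lemma is_proj_obtuse A x p y :
  convex_set A -> is_proj A x p -> A y -> dotp (x - p) (y - p) <= 0.
Proof.
move=> cA [Ap pmin] Ay.
set a := dotp (x - p) (y - p); set b := dotp (y - p) (y - p).
have b0 : 0 <= b by apply: dotp_ge0.
have small_t t : 0 < t -> t <= 1 -> 2 * a <= t * b.
  move=> t0 t1.
  have t01 : 0 <= t <= 1 by rewrite ltW.
  have := pmin _ (convex_setP cA t01 Ay Ap).
  have -> : x - (t *: y + (1 - t) *: p) = (x - p) - t *: (y - p).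
    by rewrite scalerBl scale1r scalerBr addrCA opprD addrA.
  rewrite enorm_le dotpBZ -/a -/b => h.
  by rewrite -(ler_pM2l t0); nra.
case: (lerP a 0) => // a0; exfalso.
have hab : 0 < a + b by lra.
have := small_t (a / (a + b)).
rewrite divr_gt0 // ler_pdivrMr // mul1r lerDl b0 => /(_ isT isT).
rewrite mulrAC ler_pdivlMr // => h; nra.
Qed.

(* Approximate [y] by points [z] of [A]: with [s := a / (|w|^2 + 1)] and
   [|y - z|^2 < a s], AM-GM bounds [2 s <w, y - z>] by [|y - z|^2 + s^2 |w|^2],
   which is too small for [<w, y - z> >= <w, y - p> = a > 0]. *)
Lemma is_proj_obtuse_dist0 A x p y :
  convex_set A -> is_proj A x p -> dist y A = 0 -> dotp (x - p) (y - p) <= 0.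
Proof.
move=> cA [Ap pmin] dy.
set w := x - p; set a : R := dotp w (y - p).
rewrite leNgt; apply/negP => a0.
set c : R := dotp w w; have c0 : 0 <= c := dotp_ge0 w.
set s : R := a / (c + 1).
have s0 : 0 < s by rewrite divr_gt0 //; lra.
have sc : s * c = a - s.
  have : s * (c + 1) = a by rewrite /s mulfVK //; lra.
  by rewrite mulrDr mulr1; lra.
have [z Az yz_small] : exists2 z, A z & enorm (y - z) < Num.sqrt (a * s).
  have ne : [set enorm (y - z) | z in A] !=set0 by exists (enorm (y - p)), p.
  have := @inf_lt R _ (Num.sqrt (a * s)) ne.
  rewrite -/(dist y A) dy sqrtr_gt0 mulr_gt0 // => /(_ isT) [_ [z Az <-] h].
  by exists z.
set V : R := dotp (y - z) (y - z).
have V_lt : V < a * s by move: yz_small; rewrite /enorm ltr_sqrt // mulr_gt0.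
have a_le : a <= dotp w (y - z).
  have := is_proj_obtuse cA (conj Ap pmin) Az.
  rewrite /a (_ : y - p = (y - z) + (z - p)) ?dotpDr; first lra.
  by rewrite addrA subrK.
have amgm : 2 * s * dotp w (y - z) <= V + s ^+ 2 * c.
  by rewrite dotpC dotp_AMGM.
have : s * a <= s * dotp w (y - z) by rewrite ler_pM2l.
nra.
Qed.

Lemma is_proj_residual_ge0 A x p y :
  convex_set A -> is_proj A x p -> dist y A = 0 -> 0 <= dotp (x - p) (x - y).
Proof.
move=> cA pp dy.
have -> : x - y = (x - p) - (y - p) by rewrite opprB addrA subrK.
rewrite dotpBr subr_ge0.
exact: le_trans (is_proj_obtuse_dist0 cA pp dy) (dotp_ge0 _).
Qed.

End Projection.

Section Qplus.
Variables (R : realType) (m : nat) (Q : set 'rV[R]_m).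
Hypothesis Qcv : convex_set Q.

Lemma convex_Qplus : convex_set (Qplus Q).
Proof.
move=> z1 z2 l; rewrite !inE => -[y1 [u1 [Q1 [u10 ->]]]] [y2 [u2 [Q2 [u20 ->]]]].
have l0 : 0 <= l%:num by [].
have l1 : l%:num <= 1 by [].
rewrite conv_rowE.
exists (l%:num *: y1 + (1 - l%:num) *: y2), (l%:num *: u1 + (1 - l%:num) *: u2).
split; [by apply: convex_setP; rewrite ?l0 | split].
- by move=> i; rewrite !mxE; have := u10 i; have := u20 i; nra.
- by rewrite !scalerBr opprD !addrA; congr (_ - _); rewrite addrAC.
Qed.

(* [Q^+] is stable under moving down a coordinate, so the residual is
   componentwise nonnegative. *)
Lemma is_proj_Qplus_ge0 y p i : is_proj (Qplus Q) y p -> 0 <= (y - p) 0 i.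
Proof.
move=> pp.
have p_down : Qplus Q (p - delta_mx 0 i).
  case: pp => [[y1 [u1 [Q1 [u10 ->]]]] _].
  exists y1, (u1 + delta_mx 0 i); split => //; split.
    by move=> j; rewrite !mxE; have := u10 j; case: (_ && _) => /=; lra.
  by rewrite opprD addrA.
have := is_proj_obtuse convex_Qplus pp p_down.
by rewrite addrAC subrr add0r dotpC dotpNl dotpC dotp_delta oppr_le0.
Qed.

End Qplus.

Section ConvexJacobian.
Variables (R : realType) (n m : nat).

Lemma convex_fun_slope_le (f : 'rV[R]_n -> R) x y (h : R) :
  convex_fun f -> 0 < h -> h <= 1 ->
  h^-1 * (f (h *: (y - x) + x) - f x) <= f y - f x.
Proof.
move=> cf h0 h1.
have -> : h *: (y - x) + x = h *: y + (1 - h) *: x.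
  by rewrite scalerBr scalerBl scale1r addrA addrAC.
have := cf y x h; rewrite h1 ltW // => /(_ isT) cvx.
by rewrite mulrC ler_pdivrMr // mulrC; lra.
Qed.

Variable F : 'rV[R]_n -> 'rV[R]_m.

Lemma fcomp_slope_cvg i (x u : 'rV[R]_n) : differentiable F x ->
  (fun h : R => h^-1 * (fcomp F i (h *: u + x) - fcomp F i x)) @ 0^'+
  --> (u *m jacobian F x) 0 i.
Proof.
move=> dF.
have quot : (fun h : R => h^-1 *: ((F \o shift x) (h *: u) - F x)) @ 0^'
    --> u *m jacobian F x.
  by rewrite -deriveEjacobian //; exact: (diff_derivable (v:=u) dF).
have coord : (fun h : R => (h^-1 *: ((F \o shift x) (h *: u) - F x)) 0 i) @ 0^'
    --> (u *m jacobian F x) 0 i.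
  apply: (@continuous_cvg _ _ _ _ _ _ (fun M : 'rV[R]_m => M 0 i)) => //.
  exact: coord_continuous.
have right_sub : (0 : R)^'+ `=>` (0 : R)^'.
  move=> P /=; rewrite /dnbhs /within /=; apply: filterS => h Ph h0.
  by apply: Ph; rewrite gt_eqF.
rewrite (_ : (fun h : R => _) =
    (fun h : R => (h^-1 *: ((F \o shift x) (h *: u) - F x)) 0 i)).
  exact: cvg_trans (cvg_app _ right_sub) coord.
by apply/funext => h; rewrite !mxE.
Qed.

Lemma convex_jacobian_le i (x y : 'rV[R]_n) :
  differentiable F x -> convex_fun (fcomp F i) ->
  ((y - x) *m jacobian F x) 0 i <= fcomp F i y - fcomp F i x.
Proof.
move=> dF cf.
set c := fcomp F i y - fcomp F i x.
apply: (@closed_cvg _ _ _ _ _ (fun v => v <= c) (closed_le (y := c)) _ _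
  (fcomp_slope_cvg (i := i) (u := y - x) dF)).
near=> h.
have h0 : 0 < h by near: h; exact: nbhs_right_gt.
have h1 : h <= 1 by near: h; apply: nbhs_right_le; exact: ltr01.
by have := convex_fun_slope_le x y cf h0 h1; rewrite /c /=.
Unshelve. all: by end_near.
Qed.

Lemma gradi_dotp i x u : dotp (gradi F i x) u = (u *m jacobian F x) 0 i.
Proof. by rewrite /dotp /gradi mxE; apply: eq_bigr => j _; rewrite !mxE mulrC. Qed.

End ConvexJacobian.

Section MaxI.
Variables (R : realType) (m : nat) (g : 'I_m -> R).

Lemma maxI_ge i : g i <= maxI g.
Proof. by rewrite /maxI (bigD1 i) //= le_max lexx. Qed.

Lemma maxI_argmax i0 : (forall j, g j <= g i0) -> maxI g = g i0.
Proof.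
move=> g_le; apply/le_anti; rewrite maxI_ge andbT /maxI.
apply: (big_ind (fun v => v <= g i0)) => //.
- have : i0 \in enum 'I_m by rewrite mem_enum.
  by case: (enum 'I_m) => //= j _ _; exact: g_le.
- by move=> a b ha hb; rewrite ge_max ha hb.
Qed.

End MaxI.

Lemma half_sqr_eq0 (R : realType) (d : R) : 2^-1 * d ^+ 2 = 0 -> d = 0.
Proof. by move/eqP; rewrite mulf_eq0 invr_eq0 pnatr_eq0 /= expf_eq0 /= => /eqP. Qed.

Section QuasiFejer.
Variables (R : realType) (e s : nat -> R).
Hypothesis s_ge0 : forall k, 0 <= s k.
Hypothesis e_step : forall k, e k.+1 <= e k + s k.
Hypothesis s_summable : cvg (series s @ \oo).

Let series_nd : nondecreasing_seq (series s).
Proof. by apply/nondecreasing_seqP => k; rewrite seriesSr lerDl. Qed.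

Let series_le_lim k : series s k <= limn (series s).
Proof. exact: nondecreasing_cvgn_le. Qed.

Lemma quasi_fejer_le_series k : e k <= e 0%N + series s k.
Proof.
elim: k => [|k IHk]; first by rewrite /series /= big_geq ?addr0.
by rewrite seriesSr addrA; apply: le_trans (e_step k) _; rewrite lerD2r.
Qed.

Lemma quasi_fejer_bounded k : e k <= e 0%N + limn (series s).
Proof.
by apply: le_trans (quasi_fejer_le_series k) _; rewrite lerD2l series_le_lim.
Qed.

Hypothesis e_ge0 : forall k, 0 <= e k.

Lemma quasi_fejer_cvg : cvg (e @ \oo).
Proof.
have gni : nonincreasing_seq (e \- series s).
  apply/nonincreasing_seqP => k; rewrite /= seriesSr.
  by have := e_step k; lra.
have glb : has_lbound (range (e \- series s)).
  exists (- limn (series s)) => _ [k _ <-] /=.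
  by have := e_ge0 k; have := series_le_lim k; lra.
have -> : e = (e \- series s) \+ series s by apply/funext => k /=; rewrite subrK.
exact: is_cvgD (nonincreasing_is_cvgn gni glb) s_summable.
Qed.

End QuasiFejer.

Section ABPDirection.
Variables (R : realType) (n m : nat) (F : 'rV[R]_n -> 'rV[R]_m).
Variables (C : set 'rV[R]_n) (Q : set 'rV[R]_m) (r : 'I_m -> R).
Hypothesis dF : forall y, differentiable F y.
Hypothesis cvxF : forall i, convex_fun (fcomp F i).
Variables x xs : 'rV[R]_n.

Lemma fcomp_sub_le_jacobian i :
  fcomp F i x - fcomp F i xs <= ((x - xs) *m jacobian F x) 0 i.
Proof.
have := convex_jacobian_le xs (dF x) (cvxF i).
by rewrite -opprB mulNmx mxE lerNl opprB.
Qed.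

Lemma jacobianT_residual_dotp_ge0 p :
  convex_set Q -> is_proj (Qplus Q) (F x) p -> dist (F xs) (Qplus Q) = 0 ->
  0 <= dotp ((F x - p) *m (jacobian F x)^T) (x - xs).
Proof.
move=> cQ pp dxs; rewrite dotp_mulmxT.
apply: le_trans (is_proj_residual_ge0 (convex_Qplus cQ) pp dxs) _.
rewrite /dotp; apply: ler_sum => i _; apply: ler_wpM2l.
  by have := is_proj_Qplus_ge0 cQ i pp.
by apply: le_trans (fcomp_sub_le_jacobian i); rewrite !mxE.
Qed.

Lemma gradi_dotp_ge0 i :
  (forall j, r j * (fcomp F j x - zstar F C j) <= r i * (fcomp F i x - zstar F C i)) ->
  0 < r i -> varphi F C r xs <= varphi F C r x ->
  0 <= dotp (gradi F i x) (x - xs).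
Proof.
move=> imax ri0; rewrite {2}/varphi (maxI_argmax imax) => phi_le.
have := maxI_ge (fun j => r j * (fcomp F j xs - zstar F C j)) i.
move=> /le_trans /(_ phi_le); rewrite ler_pM2l // lerD2r -subr_ge0 => fi_ge0.
by rewrite gradi_dotp; apply: le_trans fi_ge0 (fcomp_sub_le_jacobian i).
Qed.

Lemma abp_dir_dotp_ge0 a b c p pC i :
  0 <= a -> 0 <= b -> 0 <= c -> (forall j, 0 < r j) ->
  convex_set C -> convex_set Q ->
  is_proj (Qplus Q) (F x) p -> is_proj C x pC ->
  (forall j, r j * (fcomp F j x - zstar F C j) <= r i * (fcomp F i x - zstar F C i)) ->
  phi_lb F C r = phistar F C Q r -> Omega F C Q r xs ->
  0 <= dotp (abp_dir F C r a b c x p pC i) (x - xs).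
Proof.
move=> a0 b0 c0 r0 cC cQ pp ppC imax lb_eq [[Hxs Gxs] phixs].
rewrite /abp_dir !dotpDl !dotpZl; apply: addr_ge0; first apply: addr_ge0.
- case: ifP => [|_]; last by rewrite mul0r.
  rewrite lb_eq -phixs subr_ge0 => phi_le.
  by rewrite !mulr_ge0 ?(ltW (r0 i)) ?gradi_dotp_ge0.
- by rewrite mulr_ge0 ?(is_proj_residual_ge0 cC ppC (half_sqr_eq0 Hxs)).
- by rewrite mulr_ge0 ?(jacobianT_residual_dotp_ge0 cQ pp (half_sqr_eq0 Gxs)).
Qed.

End ABPDirection.

Unset Implicit Arguments.

Theorem proposition4 (R : realType) (n m : nat)
  (F : 'rV[R]_n -> 'rV[R]_m) (C : set 'rV[R]_n) (Q : set 'rV[R]_m)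
  (r : 'I_m -> R) (mu : R) (alpha beta gamma lambda : nat -> R)
  (alo ahi blo bhi glo ghi : R)
  (x : nat -> 'rV[R]_n) (p : nat -> 'rV[R]_m) (pC : nat -> 'rV[R]_n)
  (istar : nat -> 'I_m) :
  (0 < n)%N -> (0 < m)%N ->
  (forall i, 0 < r i) -> \sum_(i < m) r i = 1 ->
  0 < mu ->
  (* (A1) F is continuously differentiable *)
  (forall y, differentiable F y) -> continuous (jacobian F) ->
  (* (A2) *)
  C !=set0 -> closed C -> convex_set C ->
  Q !=set0 -> closed Q -> convex_set Q ->
  (forall i, has_lbound [set fcomp F i y | y in C]) ->
  (* (A3) *)
  (forall i, convex_fun (fcomp F i)) ->
  (* (A4) *)
  Omega F C Q r !=set0 ->
  (* (A5) *)
  (forall k, 0 < lambda k) ->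
  series lambda @ \oo --> +oo ->
  cvg (series (fun k => lambda k ^+ 2) @ \oo) ->
  (* (A6) *)
  0 < alo -> 0 < blo -> 0 < glo ->
  (forall k, alo <= alpha k <= ahi) ->
  (forall k, blo <= beta k <= bhi) ->
  (forall k, glo <= gamma k <= ghi) ->
  (* (A7) *)
  phi_lb F C r = phistar F C Q r ->
  (* the ABP iteration *)
  (forall k, is_proj (Qplus Q) (F (x k)) (p k)) ->
  (forall k, is_proj C (x k) (pC k)) ->
  (forall k j, r j * (fcomp F j (x k) - zstar F C j)
               <= r (istar k) * (fcomp F (istar k) (x k) - zstar F C (istar k))) ->
  (forall k,
     let d := abp_dir F C r (alpha k) (beta k) (gamma k) (x k) (p k) (pC k) (istar k) in
     x k.+1 = x k - (lambda k / Num.max mu (enorm d)) *: d) ->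
  (forall xs, Omega F C Q r xs ->
     cvg ((fun k => enorm (x k - xs) ^+ 2) @ \oo)) /\
  (exists M, forall k, enorm (x k) <= M).
Proof.
move=> _ _ r_gt0 _ mu_gt0 dF _ _ _ cC _ _ cQ _ cvxF [xs0 Oxs0] lam_gt0 _ lam2_sum
  alo_gt0 blo_gt0 glo_gt0 ha hb hg lb_eq hp hpC hist hx.
have coef_ge0 (lo hi : R) (c : nat -> R) :
    0 < lo -> (forall k, lo <= c k <= hi) -> forall k, 0 <= c k.
  by move=> lo_gt0 hc k; case/andP: (hc k) => /(le_trans (ltW lo_gt0)).
set e := fun xs k => dotp (x k - xs) (x k - xs).
have e_step xs : Omega F C Q r xs -> forall k, e xs k.+1 <= e xs k + lambda k ^+ 2.
  move=> Oxs k; rewrite /e (hx k) /= addrAC.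
  apply: dotp_normalized_step_le => //; first exact: ltW (lam_gt0 k).
  rewrite dotpC; apply: abp_dir_dotp_ge0 => //.
  - exact: coef_ge0 _ _ _ alo_gt0 ha k.
  - exact: coef_ge0 _ _ _ blo_gt0 hb k.
  - exact: coef_ge0 _ _ _ glo_gt0 hg k.
  - exact: cQ.
have e_ge0 xs k : 0 <= e xs k by exact: dotp_ge0.
have lam2_ge0 k : 0 <= lambda k ^+ 2 by exact: sqr_ge0.
split=> [xs Oxs | ].
  rewrite (_ : (fun k => _) = e xs); last by apply/funext => k; rewrite enorm_sqr.
  exact: quasi_fejer_cvg lam2_ge0 (e_step xs Oxs) lam2_sum (e_ge0 xs).
set B := e xs0 0%N + limn (series (fun k => lambda k ^+ 2)).
exists (Num.sqrt (2 * B + 2 * dotp xs0 xs0)) => k; apply: ler_wsqrtr.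
have := dotpD_le (x k - xs0) xs0; rewrite subrK => /le_trans; apply.
rewrite lerD2r ler_pM2l //.
exact: quasi_fejer_bounded lam2_ge0 (e_step xs0 Oxs0) lam2_sum k.
Qed.
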